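(* Let $\mathbf p$ be a map with simple boundary having $f$ interior faces, and let $v$ be the maximal valency of an interior face of $\mathbf p$. Then in any rooted planar map $\mathbf m$, every occurrence of $\mathbf p$ intersects at most $vf^2$ other occurrences of $\mathbf p$.
   Context: A planar map is a connected planar multigraph (loops and multiple edges allowed) embedded in the sphere. It is rooted if one edge is oriented, and the root face is the face to the left of the root edge. The valency of a face is the number of incident edges, bridges counted twice. A map with simple boundary is a rooted planar map whose root face is bounded by a cycle. Its other faces are interior faces. An occurrence of $\mathbf p$ in $\mathbf m$ is given by a cycle $C$ of $\mathbf m$ such that the closed region bounded by $C$ on the side not containing the root face of $\mathbf m$, with all vertices and edges inside, forms a map isomorphic to $\mathbf p$ with $C$ corresponding to the root face boundary of $\mathbf p$. The isomorphism must preserve the root face, not necessarily the root edge, and occurrences are identified with their set of interior faces. Two occurrences intersect if they share an interior face. *)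

From mathcomp Require Import all_boot all_fingroup.
Set Implicit Arguments. Unset Strict Implicit. Unset Printing Implicit Defensive.

(* A rooted combinatorial map: darts (half-edges), the edge involution
   [alpha], the vertex rotation [sigma], and a root dart. *)
Record rmap := RMap {
  dart : finType;
  alpha : {perm dart};
  sigma : {perm dart};
  root : dart }.

(* Face permutation: phi x = sigma (alpha x)  (perm product applies left first). *)
Definition phi (m : rmap) : {perm dart m} := (alpha m * sigma m)%g.

(* Vertices / faces are the cycles of sigma / phi; edges are pairs of darts. *)
Definition vertex_of (m : rmap) (x : dart m) : {set dart m} := porbit (sigma m) x.
Definition face_of (m : rmap) (x : dart m) : {set dart m} := porbit (phi m) x.

(* A rooted planar map: alpha is a fixed-point-free involution, the map is
   connected, and Euler's formula V - E + F = 2 holds (genus 0). *)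
Definition is_planar_map (m : rmap) : Prop :=
  (forall x : dart m, alpha m (alpha m x) = x /\ alpha m x <> x) /\
  (forall x y : dart m,
      connect (fun a b => (b == alpha m a) || (b == sigma m a)) x y) /\
  #|porbits (sigma m)| + #|porbits (phi m)| = #|dart m| %/ 2 + 2.

Definition root_face (m : rmap) : {set dart m} := face_of (root m).

Definition interior (m : rmap) : {set dart m} := ~: root_face m.

(* Simple boundary: the boundary walk of the root face is a cycle, i.e. no
   edge is traversed twice and all visited vertices are distinct. *)
Definition has_simple_boundary (p : rmap) : Prop :=
  is_planar_map p /\
  (forall x, x \in root_face p -> alpha p x \notin root_face p) /\
  (forall x y, x \in root_face p -> y \in root_face p -> x != y ->
     vertex_of x != vertex_of y).

(* An embedding of the closed region of p (everything but its root face) into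
   m, as the inside of a cycle of m not containing the root face of m. *)
Definition embedding (p m : rmap) (g : dart p -> dart m) : Prop :=
  {in interior p &, injective g} /\
  (forall x, x \in interior p -> g (phi p x) = phi m (g x)) /\
  (forall x, x \in interior p -> alpha p x \in interior p ->
     g (alpha p x) = alpha m (g x)) /\
  (forall x, x \in interior p -> alpha p x \notin interior p ->
     alpha m (g x) \notin g @: interior p) /\
  (forall x y, x \in interior p -> y \in interior p ->
     g y \in vertex_of (g x) -> y \in vertex_of x) /\
  root m \notin g @: interior p.

(* An occurrence, identified with its set of interior faces (represented by
   the union of their darts). *)
Definition is_occurrence (p m : rmap) (S : {set dart m}) : Prop :=
  exists g : dart p -> dart m, embedding g /\ S = g @: interior p.

Arguments is_occurrence p m S : clear implicits.

Definition n_interior_faces (p : rmap) : nat :=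
  #|[set face_of x | x in interior p]|.

(* valency of a face = number of darts in it (bridges counted twice) *)
Definition max_interior_valency (p : rmap) : nat :=
  \max_(x in interior p) #|face_of x|.

From mathcomp Require Import all_boot all_fingroup.
From Stdlib Require Import ClassicalEpsilon.

Set Implicit Arguments. Unset Strict Implicit. Unset Printing Implicit Defensive.

(** The interior darts of a map [p] with simple boundary are connected by face
   steps [phi] and interior edge steps [alpha]: a boundary dart can always be
   bypassed, since each boundary edge borders an interior face and each vertex
   carries at most one boundary corner.  Embeddings commute with these steps,
   so an embedding of [p] is determined by the image of a single interior dart.
   If an occurrence [S'] meets [S = g @: I], it shares the image of some face
   [F] of [p] with [S], and the dart [x] it sends to [g (face_repr F)] then
   determines [S'].  Hence the occurrences meeting [S] inject into the pairs
   [(F, x)], of which there are [f * #|I| <= f * (v * f)]. *)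

Section PermOrbits.
Variable T : finType.

Lemma connect_iter (f : T -> T) (R : rel T) x a b :
  (forall i, a <= i < b -> connect R (iter i f x) (iter i.+1 f x)) ->
  a <= b -> connect R (iter a f x) (iter b f x).
Proof.
elim: b => [|b IHb] step; first by rewrite leqn0 => /eqP ->.
rewrite leq_eqVlt ltnS => /orP [/eqP -> // | le_ab].
apply: connect_trans (IHb _ le_ab) (step b _); last by rewrite le_ab /=.
by move=> i /andP [le_ai lt_ib]; apply: step; rewrite le_ai ltnW.
Qed.

Lemma iter_porbit_neq (s : {perm T}) x i :
  0 < i < #|porbit s x| -> iter i s x != x.
Proof.
case/andP => i_gt0 lt_in; have lt_0n := leq_ltn_trans (leq0n i) lt_in.
rewrite -[X in _ != X]/(iter 0 s x) -(nth_traject _ lt_in) -(nth_traject _ lt_0n).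
by rewrite nth_uniq ?size_traject ?uniq_traject_porbit // -lt0n.
Qed.

Lemma porbit_step (s : {perm T}) x : porbit s (s x) = porbit s x.
Proof. exact: (porbit_perm s 1). Qed.

(* Going around a cycle of [s] in one direction or the other, we can avoid
   the single point of the cycle outside [P]. *)
Lemma connect_porbit (s : {perm T}) (P : pred T) (R : rel T) :
  connect_sym R ->
  (forall y, P y -> P (s y) -> connect R y (s y)) ->
  (forall r r', ~~ P r -> ~~ P r' -> r' \in porbit s r -> r = r') ->
  forall y w, P y -> P w -> w \in porbit s y -> connect R y w.
Proof.
move=> symR step uniqC y w Py Pw wy.
have walk x a b : (forall i, a <= i <= b -> P (iter i s x)) -> a <= b ->
    connect R (iter a s x) (iter b s x).
  move=> Pab; apply: connect_iter => i /andP [le_ai lt_ib].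
  apply: step; first by apply: Pab; rewrite le_ai ltnW.
  by apply: (Pab i.+1); rewrite lt_ib (leq_trans le_ai).
case: (pickP [pred r in porbit s y | ~~ P r]) => [r /andP [ry nPr] | allP].
  set n := #|porbit s r|.
  have Pr i : 0 < i < n -> P (iter i s r).
    move=> lt_in; apply: contraR (iter_porbit_neq lt_in) => nPi.
    by apply/eqP/esym/uniqC; rewrite // -permX mem_porbit.
  have Eyr : porbit s y = porbit s r by apply/eqP; rewrite eq_porbit_mem -porbit_sym.
  have idx z : z \in porbit s r -> P z -> exists2 i, 0 < i < n & z = iter i s r.
    rewrite porbit_traject => /trajectP [[|i] lt_in ->] Pz; last by exists i.+1.
    by rewrite Pz in nPr.
  have [a Ia ->] : exists2 a, 0 < a < n & y = iter a s r.
    by apply: idx Py; rewrite -Eyr porbit_id.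
  have [b Ib ->] : exists2 b, 0 < b < n & w = iter b s r.
    by apply: idx Pw; rewrite -Eyr.
  have Pbetween c d : 0 < c < n -> 0 < d < n -> forall i, c <= i <= d -> P (iter i s r).
    move=> /andP [c_gt0 _] /andP [_ lt_dn] i /andP [le_ci le_id].
    by apply: Pr; rewrite (leq_trans c_gt0 le_ci) (leq_ltn_trans le_id lt_dn).
  case: (leqP a b) => [le_ab | /ltnW le_ba].
    exact: walk (Pbetween _ _ Ia Ib) le_ab.
  by rewrite symR; apply: walk (Pbetween _ _ Ib Ia) le_ba.
have [b ->] := porbitP _ _ _ wy; rewrite permX -[y]/(iter 0 s y).
apply: walk => // i _; have := allP (iter i s y).
by rewrite /= -permX mem_porbit /= => /negbFE.
Qed.

End PermOrbits.

Lemma connect_homo (T T' : finType) (f : T -> T') (e : rel T) (e' : rel T') :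
  (forall a b, e a b -> connect e' (f a) (f b)) ->
  forall a b, connect e a b -> connect e' (f a) (f b).
Proof.
move=> homo_f a _ /connectP [q e_q ->].
elim: q a e_q => [|c q IHq] a /=; first by rewrite connect0.
by case/andP => /homo_f e'_ac /IHq; apply: connect_trans.
Qed.

Lemma interior_phi (p : rmap) x : (phi p x \in interior p) = (x \in interior p).
Proof.
by rewrite !in_setC /root_face /face_of porbit_sym porbit_step -porbit_sym.
Qed.

Lemma interior_iter_phi (p : rmap) k x :
  (iter k (phi p) x \in interior p) = (x \in interior p).
Proof. by elim: k => //= k IHk; rewrite interior_phi. Qed.

Section InteriorConnected.
Variable p : rmap.
Hypothesis p_planar : is_planar_map p.
Hypothesis boundary_alpha :
  forall x, x \in root_face p -> alpha p x \notin root_face p.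
Hypothesis boundary_vertex : forall x y, x \in root_face p -> y \in root_face p ->
  x != y -> vertex_of x != vertex_of y.

Local Notation I := (interior p).

Lemma alphaK : involutive (alpha p).
Proof. by move=> x; case: p_planar => /(_ x) []. Qed.

Lemma phi_alpha x : phi p (alpha p x) = sigma p x.
Proof. by rewrite /phi permM alphaK. Qed.

Lemma interior_alpha x : x \notin I -> alpha p x \in I.
Proof. by rewrite !in_setC negbK; apply: boundary_alpha. Qed.

Definition interior_adj : rel (dart p) := fun a b =>
  [&& a \in I, b \in I & [|| b == phi p a, a == phi p b | b == alpha p a]].

Lemma interior_adj_sym : symmetric interior_adj.
Proof.
move=> a b; rewrite /interior_adj andbCA; congr [&& _, _ & _].
by rewrite orbCA; congr [|| _, _ | _]; rewrite eq_sym (can2_eq alphaK alphaK).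
Qed.

Lemma connect_interior_sigma y :
  y \in I -> sigma p y \in I -> connect interior_adj y (sigma p y).
Proof.
move=> yI syI; have ayI : alpha p y \in I by rewrite -interior_phi phi_alpha.
apply: (@connect_trans _ _ (alpha p y)); apply: connect1.
  by rewrite /interior_adj yI ayI eqxx !orbT.
by rewrite /interior_adj ayI syI phi_alpha eqxx.
Qed.

Lemma connect_interior_vertex y w : y \in I -> w \in I -> w \in vertex_of y ->
  connect interior_adj y w.
Proof.
apply: (connect_porbit (P := mem I)) => /=.
- exact: sym_connect_sym interior_adj_sym.
- exact: connect_interior_sigma.
move=> r r'; rewrite !inE !negbK => rR r'R.
apply: contraTeq => neq_rr'; rewrite -eq_porbit_mem eq_sym.
exact: boundary_vertex.
Qed.

(* A boundary dart [z] is replaced by [sigma z = phi (alpha z)], which lies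
   on the interior face across the edge of [z]. *)
Definition vertex_repr z := if z \in I then z else sigma p z.

Lemma vertex_repr_interior z : vertex_repr z \in I.
Proof.
rewrite /vertex_repr; case: ifPn => // /interior_alpha.
by rewrite -phi_alpha interior_phi.
Qed.

Lemma vertex_of_repr z : vertex_of (vertex_repr z) = vertex_of z.
Proof. by rewrite /vertex_repr; case: ifP => // _; apply: porbit_step. Qed.

Lemma connect_vertex_repr a b : (b == alpha p a) || (b == sigma p a) ->
  connect interior_adj (vertex_repr a) (vertex_repr b).
Proof.
case/orP => /eqP ->; last first.
  apply: connect_interior_vertex; rewrite ?vertex_repr_interior //.
  have <- : vertex_of (vertex_repr (sigma p a)) = vertex_of (vertex_repr a).
    by rewrite !vertex_of_repr; apply: porbit_step.
  exact: porbit_id.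
apply: connect1; rewrite /interior_adj !vertex_repr_interior /vertex_repr /=.
have [aI | /interior_alpha aaI] := boolP (a \in I); last first.
  by rewrite aaI phi_alpha eqxx orbT.
by case: ifP => _; rewrite ?eqxx ?orbT // -phi_alpha alphaK eqxx.
Qed.

Lemma connect_interior x y : x \in I -> y \in I -> connect interior_adj x y.
Proof.
move=> xI yI; case: p_planar => _ [/(_ x y) conn_xy _].
have := connect_homo connect_vertex_repr conn_xy.
by rewrite /vertex_repr xI yI.
Qed.

End InteriorConnected.

Section Embeddings.
Variables p m : rmap.

Lemma embedding_iter_phi (g : dart p -> dart m) k x :
  embedding g -> x \in interior p -> g (iter k (phi p) x) = iter k (phi m) (g x).
Proof.
case=> _ [g_phi _] xI; elim: k => //= k IHk.
by rewrite g_phi ?interior_iter_phi // IHk.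
Qed.

Lemma embedding_eq_interior (g1 g2 : dart p -> dart m) u :
  has_simple_boundary p -> embedding g1 -> embedding g2 ->
  u \in interior p -> g1 u = g2 u -> {in interior p, g1 =1 g2}.
Proof.
move=> [p_planar [bd_alpha bd_vertex]] [_ [g1_phi [g1_alpha _]]]
  [_ [g2_phi [g2_alpha _]]] uI g12u y yI.
have /connectP [q adj_q ->] := connect_interior p_planar bd_alpha bd_vertex uI yI.
elim: q u adj_q g12u {uI yI} => [|z q IHq] u //= /andP [adj_uz adj_q] g12u.
apply: IHq adj_q _; case/and3P: adj_uz => uI zI /or3P [] /eqP Ez.
- by rewrite Ez g1_phi // g2_phi // g12u.
- by apply: (@perm_inj _ (phi m)); rewrite -g1_phi // -g2_phi // -Ez.
- have auI : alpha p u \in interior p by rewrite -Ez.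
  by rewrite Ez g1_alpha // g2_alpha // g12u.
Qed.

End Embeddings.

Definition face_repr (p : rmap) (F : {set dart p}) := odflt (root p) [pick x in F].

Lemma face_repr_iter (p : rmap) x : exists k, face_repr (face_of x) = iter k (phi p) x.
Proof.
rewrite /face_repr; case: pickP => [y /porbitP [k ->] | /(_ x)].
  by exists k; rewrite permX.
by rewrite porbit_id.
Qed.

Lemma card_interior (p : rmap) :
  #|interior p| <= max_interior_valency p * n_interior_faces p.
Proof.
set faces := [set face_of x | x in interior p].
have sub : interior p \subset cover faces.
  apply/subsetP => x xI; apply/bigcupP; exists (face_of x); first exact: imset_f.
  exact: porbit_id.
apply: leq_trans (subset_leq_card sub) _.
apply: leq_trans (leq_card_cover faces).1 _.
rewrite mulnC -sum_nat_const; apply: leq_sum => _ /imsetP [x xI ->].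
by rewrite /max_interior_valency (bigD1 x) //= leq_maxl.
Qed.

Lemma leq_card_rel (A B : finType) (T : {set A}) (K : {set B}) (Q : A -> B -> Prop) :
  (forall a, a \in T -> exists2 b, b \in K & Q a b) ->
  (forall a1 a2 b, a1 \in T -> a2 \in T -> Q a1 b -> Q a2 b -> a1 = a2) ->
  #|T| <= #|K|.
Proof.
move=> Q_total Q_inj.
pose Qb a b : bool := if excluded_middle_informative (Q a b) then true else false.
have QbP a b : Qb a b -> Q a b by rewrite /Qb; case: excluded_middle_informative.
pose f a := [pick b in K | Qb a b].
have fS a : a \in T -> exists2 b, f a = Some b & b \in K /\ Q a b.
  move=> aT; rewrite /f; case: pickP => [b /andP [bK /QbP]|none]; first by exists b.
  have [b bK Qab] := Q_total a aT.
  by have := none b; rewrite bK /Qb; case: excluded_middle_informative.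
have f_inj : {in T &, injective f}.
  move=> a1 a2 a1T a2T; have [b1 -> [_ Q1]] := fS a1 a1T.
  have [b2 -> [_ Q2]] := fS a2 a2T; case=> E; rewrite -E in Q2.
  exact: Q_inj Q1 Q2.
rewrite -(card_in_imset f_inj) -(card_imset K (@Some_inj _)).
apply/subset_leq_card/subsetP => _ /imsetP [a aT ->].
by have [b -> [bK _]] := fS a aT; apply: imset_f.
Qed.

Theorem mainTheorem6 (p m : rmap) :
  has_simple_boundary p -> is_planar_map m ->
  forall S : {set dart m}, is_occurrence p m S ->
  forall T : {set {set dart m}},
    (forall S', S' \in T ->
       [/\ is_occurrence p m S', S' != S & S' :&: S != set0]) ->
    #|T| <= max_interior_valency p * (n_interior_faces p) ^ 2.
Proof.
move=> p_simple _ S [g [g_emb ->]] T T_meet.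
set I := interior p; set faces := [set face_of x | x in I].
pose Q (S' : {set dart m}) (k : {set dart p} * dart p) :=
  exists2 g', embedding g' & [/\ S' = g' @: I, k.2 \in I & g' k.2 = g (face_repr k.1)].
apply: leq_trans (@leq_card_rel _ _ T (setX faces I) Q _ _) _.
- move=> S' /T_meet [[g' [g'_emb ->]] _ /set0Pn [_ /setIP [/imsetP [x' x'I ->]]]].
  case/imsetP => x xI gx; have [k Ek] := face_repr_iter x.
  exists (face_of x, iter k (phi p) x').
    by rewrite in_setX imset_f //= interior_iter_phi.
  exists g' => //; split; rewrite //= ?interior_iter_phi //.
  by rewrite Ek !embedding_iter_phi // gx.
- move=> S1 S2 [F x] _ _ [g1 g1_emb [-> /= xI g1x]] [g2 g2_emb [-> _ g2x]].
  apply: eq_in_imset; apply: (embedding_eq_interior p_simple g1_emb g2_emb xI).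
  by rewrite g1x g2x.
rewrite cardsX [n_interior_faces p ^ 2]expnS expn1 mulnCA leq_mul2l.
by rewrite card_interior orbT.
Qed.
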